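(* Let $X$ be a path-connected finite down-wide poset and let $f\colon X\to\mathbb R$ be an injective Morse function. Let $a<b$ be real numbers. If $b_0(X_a)<b_0(X_b)$, then there exists a critical value $c\in(a,b]$ of $f$ such that $b_0(X_c)=b_0(X_a)+1$; moreover, the critical point $x$ with $f(x)=c$ is a minimal element of $X$.
   Context: A finite poset is regarded as a finite $T_0$-space whose open sets are down-sets; $U_x=\{y: y\le x\}$. Write $a\prec b$ if $a<b$ and there is no $c$ with $a<c<b$. $X$ is down-wide if $\#\{y:y\prec x\}\ge2$ for every non-minimal $x$. A Morse function on $X$ is a map $f\colon X\to\mathbb R$ such that for every $x$, $\#\{y: x\prec y,\ f(x)\ge f(y)\}\le1$ and $\#\{w: w\prec x,\ f(w)\ge f(x)\}\le 1$; $x$ is critical if both sets are empty, and critical values are images of critical points. For $t\in\mathbb R$, $X_t=X^f_t=\bigcup_{f(x)\le t}U_x$ (an open subposet). $b_0(Y)$ denotes the number of connected components of $Y$. *)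

(* Finite posets are finPOrderType; real values in an
   arbitrary realFieldType R (this covers R = the real numbers). *)
From HB Require Import structures.
From mathcomp Require Import all_boot all_order all_algebra.
Set Implicit Arguments. Unset Strict Implicit. Unset Printing Implicit Defensive.
Import Order.TTheory GRing.Theory Num.Theory.

Local Open Scope order_scope.

Section Defs.
Context {d : Order.disp_t} (T : finPOrderType d).

Definition covers (a b : T) : bool :=
  (a < b) && ~~ [exists c : T, (a < c) && (c < b)].

Definition minimalb (x : T) : bool := ~~ [exists y : T, y < x].

Definition down_wide : Prop :=
  forall x : T, ~~ minimalb x -> 2 <= #|[set y : T | covers y x]|.

Definition comp_in (A : {set T}) : rel T :=
  fun x y => [&& x \in A, y \in A & (x <= y) || (y <= x)].

(* number of connected components of the subspace A of the finite T0-space *)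
Definition b0 (A : {set T}) : nat := n_comp (comp_in A) (mem A).

(* path-connectedness of the whole finite T0-space *)
Definition path_connected : Prop :=
  forall x y : T, connect (comp_in setT) x y.

Context {R : realFieldType}.

Definition morse (f : T -> R) : Prop :=
  forall x : T,
    #|[set y : T | covers x y && (f y <= f x)%R]| <= 1 /\
    #|[set w : T | covers w x && (f x <= f w)%R]| <= 1.

Definition critical (f : T -> R) (x : T) : Prop :=
  [set y : T | covers x y && (f y <= f x)%R] = set0 /\
  [set w : T | covers w x && (f x <= f w)%R] = set0.

Definition sublevel (f : T -> R) (t : R) : {set T} :=
  [set y : T | [exists x : T, (f x <= t)%R && (y <= x)]].

End Defs.

(* Take x minimising f among the points with a < f x <= b whose sublevel set
   has more components than X_a; such points exist because X_b equals the
   sublevel set at the largest value of f in (a, b].  If t is the largest value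
   of f below f x (or a), then X_t has at most b0(X_a) components by the choice
   of x, and X_(f x) = X_t ∪ U_x by injectivity.  Attaching the connected set
   U_x adds at most one component, and none if U_x meets X_t.  Hence
   b0(X_(f x)) = b0(X_a) + 1 and U_x is disjoint from X_t: every y <= x has
   f y >= f x.  Down-wideness and the Morse condition then force x to be
   minimal, and it is critical since any y > x with f y < f x would put x in
   X_t. *)
From HB Require Import structures.
From mathcomp Require Import all_boot all_order all_algebra.
Import Order.TTheory GRing.Theory Num.Theory.
Set Implicit Arguments. Unset Strict Implicit. Unset Printing Implicit Defensive.

Local Notation down_set x := [set y | (y <= x)%O].

Section Components.
Context {d : Order.disp_t} (T : finPOrderType d).
Local Open Scope order_scope.
Implicit Types (A B : {set T}) (x y : T).
Local Notation comp_root A := (fingraph.root (comp_in A)).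

Lemma comp_in_sym A : connect_sym (comp_in A).
Proof. by apply: sym_connect_sym => u v; rewrite /comp_in andbCA orbC. Qed.

Lemma mem_connect_comp_in A u v : connect (comp_in A) u v -> u \in A -> v \in A.
Proof.
have clA : closed (comp_in A) (mem A) by move=> p q /and3P[-> -> _].
by move=> uv uA; rewrite -(closed_connect clA uv).
Qed.

Lemma connect_comp_in_subset A B :
  A \subset B -> subrel (connect (comp_in A)) (connect (comp_in B)).
Proof.
move=> sAB; apply: connect_sub => u v /and3P[uA vA uv]; apply: connect1.
by rewrite /comp_in (subsetP sAB _ uA) (subsetP sAB _ vA).
Qed.

Lemma b0E A : b0 A = #|comp_root A @: A|.
Proof.
rewrite /b0 /n_comp_mem; apply: eq_card => r; rewrite !inE.
apply/idP/imsetP => [/andP[/eqP rr rA] | [u uA ->]]; first by exists r.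
rewrite (roots_root (comp_in_sym A)) /=.
exact: mem_connect_comp_in (connect_root _ u) uA.
Qed.

Lemma card_imset_root_le A B : A \subset B -> (#|comp_root B @: A| <= b0 A)%N.
Proof.
move=> sAB; rewrite b0E.
have -> : comp_root B @: A = comp_root B @: (comp_root A @: A).
  rewrite -imset_comp; apply: eq_in_imset => u _ /=.
  apply/(fingraph.rootP (comp_in_sym B)).
  exact: connect_comp_in_subset sAB _ _ (connect_root _ u).
exact: leq_imset_card.
Qed.

Lemma imset_root_down_set B x :
  down_set x \subset B -> comp_root B @: down_set x = [set comp_root B x].
Proof.
move=> sUB; have xB : x \in B by apply: (subsetP sUB); rewrite inE.
apply/setP => r; rewrite inE; apply/imsetP/eqP => [[y yUx ->] | ->].
  have yx : y <= x by rewrite inE in yUx.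
  apply/(fingraph.rootP (comp_in_sym B))/connect1.
  by rewrite /comp_in (subsetP sUB _ yUx) xB yx.
by exists x; rewrite ?inE.
Qed.

Lemma b0_setU_down_setE A x :
  b0 (A :|: down_set x) =
  #|comp_root (A :|: down_set x) x |: comp_root (A :|: down_set x) @: A|.
Proof. by rewrite b0E imsetU imset_root_down_set ?subsetUr // setUC. Qed.

Lemma b0_setU_down_set A x : (b0 (A :|: down_set x) <= (b0 A).+1)%N.
Proof.
rewrite b0_setU_down_setE cardsU1 -add1n leq_add ?leq_b1 //.
exact/card_imset_root_le/subsetUl.
Qed.

Lemma b0_setU_down_set_meet A x y :
  y \in A -> y <= x -> (b0 (A :|: down_set x) <= b0 A)%N.
Proof.
move=> yA yx; rewrite b0_setU_down_setE.
set B := A :|: _; have sAB : A \subset B by rewrite subsetUl.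
have -> : comp_root B x = comp_root B y.
  apply/(fingraph.rootP (comp_in_sym B))/connect1.
  by rewrite /comp_in (subsetP sAB _ yA) !inE lexx yx !orbT.
by rewrite (setUidPr _) ?sub1set ?imset_f // card_imset_root_le.
Qed.

End Components.

Local Open Scope ring_scope.

Lemma last_value_below (S : finType) (R : realDomainType) (f : S -> R)
    (P : pred R) (a : R) :
  (forall s t, s <= t -> P t -> P s) -> P a ->
  exists t, [/\ a <= t, forall z, P (f z) = (f z <= t)
    & t = a \/ exists2 w, a < f w & t = f w].
Proof.
move=> P_down Pa; pose Q z := (a < f z) && P (f z).
have [z0 Qz0 | noQ] := pickP Q.
  have [w /andP[aw Pw] w_max] := arg_maxP f Qz0.
  exists (f w); split; [exact: ltW | move=> z | by right; exists w].
  apply/idP/idP => [Pz | zw]; last exact: P_down zw Pw.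
  case: (leP (f z) a) => [za | az]; first exact: le_trans za (ltW aw).
  by apply: w_max; rewrite /Q az.
exists a; split => //; last by left.
move=> z; apply/idP/idP => [Pz | za]; last exact: P_down za Pa.
by rewrite leNgt; apply: contraFN (noQ z) => az; rewrite /Q az.
Qed.

Section Sublevel.
Context {d : Order.disp_t} (T : finPOrderType d) (R : realFieldType) (f : T -> R).

Lemma eq_sublevel s t : (forall z, (f z <= s) = (f z <= t)) ->
  sublevel f s = sublevel f t.
Proof.
by move=> Est; apply/setP => y; rewrite !inE; apply: eq_existsb => z; rewrite Est.
Qed.

(* [t] lies just below [f x]: [sublevel f t] is the union of the U_z with f z < f x. *)
Variables (x : T) (t : R).
Hypothesis below_x : forall z, (f z < f x) = (f z <= t).

Lemma sublevel_split : injective f -> sublevel f (f x) = sublevel f t :|: down_set x.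
Proof.
move=> f_inj; apply/setP => y; rewrite !inE.
apply/existsP/orP => [[z /andP[]] | [/existsP[z] | yx]].
- rewrite le_eqVlt => /predU1P[/f_inj -> | ]; first by right.
  by rewrite below_x => zt yz; left; apply/existsP; exists z; rewrite zt.
- by rewrite -below_x => /andP[/ltW zx yz]; exists z; rewrite zx.
- by exists x; rewrite lexx.
Qed.

Hypothesis fresh : [disjoint down_set x & sublevel f t].

Lemma le_down_set_fresh y : (y <= x)%O -> f x <= f y.
Proof.
move=> yx; rewrite leNgt below_x; apply: contraL fresh => fyt.
apply/pred0Pn; exists y; rewrite !inE yx /=.
by apply/existsP; exists y; rewrite fyt lexx.
Qed.

Lemma minimal_fresh : down_wide T -> morse f -> minimalb x.
Proof.
move=> dw /(_ x)[_ lower_le1]; apply: contraT => /dw two_lower.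
have lower_fresh :
    [set w | covers w x] \subset [set w | covers w x && (f x <= f w)].
  apply/subsetP => w; rewrite !inE => cwx.
  by rewrite cwx le_down_set_fresh // ltW //; case/andP: cwx.
by have := leq_trans two_lower (leq_trans (subset_leq_card lower_fresh) lower_le1).
Qed.

Lemma critical_fresh : injective f -> minimalb x -> critical f x.
Proof.
move=> f_inj min_x; split; apply/setP => y; rewrite !inE; last first.
  by apply: contraNF min_x => /andP[/andP[yx _] _]; apply/existsP; exists y.
apply/negbTE/andP => -[/andP[xy _] fyx].
have fyx' : f y < f x by rewrite lt_neqAle fyx andbT (inj_eq f_inj) gt_eqF.
move/pred0P: fresh => /(_ x); rewrite !inE lexx /=.
by move/existsP; apply; exists y; rewrite -below_x fyx' ltW.
Qed.

End Sublevel.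

Theorem mainTheorem8 (d : Order.disp_t) (T : finPOrderType d) (R : realFieldType)
    (f : T -> R) (a b : R) :
  path_connected T -> down_wide T -> morse f -> injective f -> a < b ->
  (b0 (sublevel f a) < b0 (sublevel f b))%N ->
  exists x : T,
    [/\ critical f x, a < f x <= b,
        b0 (sublevel f (f x)) = (b0 (sublevel f a)).+1
      & minimalb x].
Proof.
move=> _ dw morse_f f_inj ab lt_ab.
pose jump z := [&& a < f z, f z <= b & (b0 (sublevel f a) < b0 (sublevel f (f z)))%N].
have [z0 jump_z0] : exists z, jump z.
  have [t [_ /= Et [ta | [w aw tw]]]] :=
    last_value_below f (fun s t st => @le_trans _ _ t s b st) (ltW ab).
  - by move: lt_ab; rewrite (eq_sublevel Et) ta ltnn.
  - by exists w; rewrite /jump aw Et -tw lexx -(eq_sublevel Et).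
have [x /and3P[ax xb lt_x] x_min] := arg_minP f jump_z0.
have [t [_ /= Et t_prev]] :=
  last_value_below f (fun s t st => @le_lt_trans _ _ t s (f x) st) ax.
have le_t : (b0 (sublevel f t) <= b0 (sublevel f a))%N.
  case: t_prev => [-> // | [w aw tw]]; rewrite leqNgt tw; apply/negP => lt_w.
  have fwx : f w < f x by rewrite Et -tw.
  by have := x_min w; rewrite /jump aw lt_w (le_trans (ltW fwx) xb) leNgt fwx => /(_ isT).
have split_x := sublevel_split Et f_inj.
have fresh : [disjoint down_set x & sublevel f t].
  apply: contraT => /pred0Pn[y]; rewrite /= inE => /andP[yx yt].
  have := leq_trans (b0_setU_down_set_meet yt yx) le_t.
  by rewrite -split_x leqNgt lt_x.
have min_x := minimal_fresh Et fresh dw morse_f.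
exists x; split; [exact: critical_fresh | by rewrite ax | | exact: min_x].
apply/eqP; rewrite eqn_leq lt_x andbT split_x.
by apply: leq_trans (b0_setU_down_set _ _) _; rewrite ltnS.
Qed.
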